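(* Let $G=(V,E)$ be a finite, simple, undirected, loopless graph with at least one wedge. For each vertex $v$ let $N_1(v)$ be the closed neighborhood of $v$ (the set consisting of $v$ and all vertices adjacent to $v$), let $W_v$ be the set of wedges centered at $v$ (so $|W_v|=\binom{d_v}{2}$, where $d_v$ is the degree of $v$), let $W$ be the set of all wedges, and let $p_v=|W_v|/|W|$. Let $\mathrm{cut}(S)$ denote the number of edges with exactly one endpoint in $S\subseteq V$, and let $\kappa$ be the global clustering coefficient of $G$. Then $$\sum_{v\in V} p_v\,\frac{\mathrm{cut}(N_1(v))}{|W_v|} = 2(1-\kappa),$$ where each summand $p_v\,\mathrm{cut}(N_1(v))/|W_v|$ is interpreted as $\mathrm{cut}(N_1(v))/|W|$ (which coincides with the literal expression whenever $|W_v|>0$). Equivalently, $\sum_{v\in V}\mathrm{cut}(N_1(v)) = 2(1-\kappa)|W|$.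
   Context: A wedge is an unordered pair of distinct edges sharing an endpoint, $\{(s,t),(s,u)\}$; its center is $s$. The wedge is closed if the edge $(t,u)$ is in $E$, and open otherwise. The global clustering coefficient is $\kappa = (\text{number of closed wedges})/|W|$. *)

From mathcomp Require Import all_boot all_order all_algebra.
Set Implicit Arguments. Unset Strict Implicit. Unset Printing Implicit Defensive.
Import GRing.Theory Num.Theory.

(* A finite simple undirected loopless graph: vertex type T : finType,
   adjacency e : rel T, assumed symmetric and irreflexive (hypotheses). *)
Section Graph.
Variables (T : finType) (e : rel T).

(* Edge set: unordered pairs {x,y} with x adjacent to y (x <> y by irreflexivity). *)
Definition edges : {set {set T}} :=
  [set E : {set T} | [exists x, exists y, (e x y) && (E == [set x; y])]].

Definition wedges : {set {set {set T}}} :=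
  [set w : {set {set T}} | [exists E1, exists E2,
      [&& E1 \in edges, E2 \in edges, E1 != E2,
          (E1 :&: E2) != set0 & w == [set E1; E2]]]].

Definition wedge_centered (v : T) (w : {set {set T}}) : bool :=
  [exists t, exists u, (t != u) && (w == [set [set v; t]; [set v; u]])].

Definition wedges_at (v : T) : {set {set {set T}}} :=
  [set w in wedges | wedge_centered v w].

Definition closed_wedge (w : {set {set T}}) : bool :=
  [exists s, exists t, exists u,
     (w == [set [set s; t]; [set s; u]]) && ([set t; u] \in edges)].

Definition closed_wedges : {set {set {set T}}} :=
  [set w in wedges | closed_wedge w].

Definition kappa : rat := (#|closed_wedges|%:R / #|wedges|%:R)%R.

Definition closed_nbhd (v : T) : {set T} := v |: [set x | e v x].

Definition cut (S : {set T}) : nat :=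
  #|[set E in edges | #|E :&: S| == 1%N]|.

End Graph.

From mathcomp Require Import all_boot all_order all_algebra.
From mathcomp Require Import ring.
Import GRing.Theory Num.Theory.
Set Implicit Arguments. Unset Strict Implicit. Unset Printing Implicit Defensive.

(* An edge {x, y} leaves the closed neighbourhood N_1(v) exactly when v - x - y
   (or v - y - x) is an induced path, i.e. an open wedge centered at x with v as
   one of its ends.  Summing over v therefore counts every open wedge twice,
   once from each end, so sum_v cut(N_1(v)) = 2 |open wedges| = 2 (1 - kappa) |W|. *)

Lemma eq_set2 (U : finType) (a b c d : U) :
  [set a; b] = [set c; d] -> (a = c /\ b = d) \/ (a = d /\ b = c).
Proof.
move=> H.
have ha : a \in [set c; d] by rewrite -H set21.
have hb : b \in [set c; d] by rewrite -H set22.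
have hc : c \in [set a; b] by rewrite H set21.
have hd : d \in [set a; b] by rewrite H set22.
move: ha hb hc hd; rewrite !inE.
case/orP=> /eqP ->; case/orP=> /eqP ->; try by auto.
- by move=> _ /orP[] /eqP ->; auto.
- by move=> /orP[] /eqP -> _; auto.
Qed.

Lemma eq_set2_set2 (U : finType) (x v y s t u : U) :
  s != t -> s != u -> t != u ->
  [set [set x; v]; [set x; y]] = [set [set s; t]; [set s; u]] ->
  x = s /\ ((v = t /\ y = u) \/ (v = u /\ y = t)).
Proof.
move=> st su tu /eq_set2 [[/eq_set2 H1 /eq_set2 H2]|[/eq_set2 H1 /eq_set2 H2]];
case: H1 => [[? ?]|[? ?]]; case: H2 => [[? ?]|[? ?]]; subst;
rewrite ?eqxx in st su tu *; by auto.
Qed.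

Lemma cardsI2 (U : finType) (a b : U) (S : {set U}) : a != b ->
  #|[set a; b] :&: S| = ((a \in S) + (b \in S))%N.
Proof.
move=> ab; rewrite -sum1_card big_mkcond (bigD1 a) //= (bigD1 b) 1?eq_sym //=.
rewrite big1 => [|x /andP [xa xb]]; last by rewrite !inE (negbTE xa) (negbTE xb).
by rewrite !inE !eqxx orbT /=; case: (a \in S); case: (b \in S).
Qed.

Section Wedges.
Variables (T : finType) (e : rel T).
Hypotheses (e_sym : symmetric e) (e_irr : irreflexive e).

Lemma adj_neq x y : e x y -> x != y.
Proof. by apply: contraTneq => ->; rewrite e_irr. Qed.

Lemma set2_in_edges t u : ([set t; u] \in edges e) = e t u.
Proof.
rewrite inE; apply/existsP/idP => [[x /existsP [y /andP [exy /eqP H]]]|etu].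
  by case: (eq_set2 H) => [[-> ->]|[-> ->]] //; rewrite e_sym.
by exists t; apply/existsP; exists u; rewrite etu eqxx.
Qed.

Lemma edge_at z E : E \in edges e -> z \in E -> exists2 c, e z c & E = [set z; c].
Proof.
rewrite inE => /existsP [a /existsP [b /andP [eab /eqP ->]]].
rewrite !inE => /orP [] /eqP ->; first by exists b.
by exists a; rewrite 1?e_sym // setUC.
Qed.

Lemma wedgeP w :
  reflect (exists s t u, [/\ e s t, e s u, t != u & w = [set [set s; t]; [set s; u]]])
          (w \in wedges e).
Proof.
apply: (iffP idP).
  rewrite inE => /existsP [E1 /existsP [E2 /and5P [E1e E2e E12 /set0Pn [s] + /eqP ->]]].
  rewrite inE => /andP [sE1 sE2].
  have [t est defE1] := edge_at E1e sE1; have [u esu defE2] := edge_at E2e sE2.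
  subst E1 E2.
  by exists s, t, u; split=> //; apply: contraNneq E12 => ->.
case=> [s [t [u [est esu tu ->]]]].
rewrite inE; apply/existsP; exists [set s; t]; apply/existsP; exists [set s; u].
rewrite !set2_in_edges est esu eqxx /= andbT; apply/andP; split.
  apply/negP => /eqP /eq_set2 [[_ /eqP]|[_ ts]]; first by rewrite (negbTE tu).
  by move: est; rewrite ts e_irr.
by apply/set0Pn; exists s; rewrite !inE eqxx.
Qed.

Lemma closed_wedgeE s t u : s != t -> s != u -> t != u ->
  closed_wedge e [set [set s; t]; [set s; u]] = e t u.
Proof.
move=> st su tu; apply/existsP/idP => [[s' /existsP [t' /existsP [u' /andP [/eqP H]]]]|etu].
  rewrite set2_in_edges.
  by case: (eq_set2_set2 st su tu (esym H)) => _ [[-> ->]|[-> ->]] //; rewrite e_sym.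
by exists s; apply/existsP; exists t; apply/existsP; exists u; rewrite eqxx set2_in_edges.
Qed.

(* The open wedge {{x, v}, {x, y}} centered at x, oriented by the choice of v. *)
Definition open_path v x y := [&& e v x, e x y, v != y & ~~ e v y].

Definition open_paths := [set p : T * (T * T) | open_path p.1 p.2.1 p.2.2].

Definition path_wedge (p : T * (T * T)) : {set {set T}} :=
  [set [set p.2.1; p.1]; [set p.2.1; p.2.2]].

Lemma cut_edge_open v x y : e x y ->
  (#|[set x; y] :&: closed_nbhd e v| == 1%N) = open_path v x y || open_path v y x.
Proof.
move=> exy; rewrite cardsI2 ?(adj_neq exy) // /closed_nbhd !inE /open_path (e_sym y) exy.
case: (eqVneq x v) exy => [->|_] exy; first by rewrite e_irr exy orbT.
case: (eqVneq y v) exy => [->|_] exy; first by rewrite e_irr e_sym exy orbT.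
by case: (e v x); case: (e v y).
Qed.

Lemma cut_closed_nbhd v :
  cut e (closed_nbhd e v) = #|[set p : T * T | open_path v p.1 p.2]|.
Proof.
rewrite /cut.
have -> : [set E in edges e | #|E :&: closed_nbhd e v| == 1%N] =
          [set [set p.1; p.2] | p in [set p : T * T | open_path v p.1 p.2]].
  apply/setP => E; apply/idP/imsetP.
    rewrite inE => /andP []; rewrite inE => /existsP [x /existsP [y]].
    case/andP=> exy /eqP ->; rewrite cut_edge_open // => /orP [vxy|vyx].
      by exists (x, y); rewrite ?inE.
    by exists (y, x); rewrite ?inE // setUC.
  case=> -[x y]; rewrite inE /= => vxy ->.
  have exy : e x y by move: vxy; rewrite /open_path => /and4P [].
  by rewrite inE set2_in_edges exy cut_edge_open // vxy.
rewrite card_in_imset // => -[x y] [x' y']; rewrite !inE /open_path /=.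
case/and4P=> _ _ _ nvy /and4P [evx' _ _ _] /eq_set2 [[-> ->] //|[_ yx']].
by move: nvy; rewrite yx' evx'.
Qed.

Lemma sum_cut_closed_nbhd : (\sum_v cut e (closed_nbhd e v))%N = #|open_paths|.
Proof.
under eq_bigr do rewrite cut_closed_nbhd -sum1_card.
by rewrite pair_big_dep -sum1_card; apply: eq_bigl => p; rewrite !inE.
Qed.

Lemma path_wedge_open p : p \in open_paths ->
  path_wedge p \in wedges e :\: closed_wedges e.
Proof.
case: p => v [x y]; rewrite inE /open_path /= => /and4P [evx exy vy nvy].
have w_in : path_wedge (v, (x, y)) \in wedges e.
  by apply/wedgeP; exists x, v, y; rewrite e_sym.
rewrite in_setD w_in andbT inE w_in /path_wedge /= closed_wedgeE ?(adj_neq exy) //.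
by rewrite eq_sym adj_neq.
Qed.

Lemma card_path_wedge_fibre w : w \in wedges e :\: closed_wedges e ->
  #|[set p in open_paths | path_wedge p == w]| = 2.
Proof.
case/setDP=> w_in; rewrite inE w_in /=.
case/wedgeP: w_in => s [t [u [est esu tu Hw]]].
have st := adj_neq est; have su := adj_neq esu.
rewrite {1}Hw closed_wedgeE // => ntu.
have -> : [set p in open_paths | path_wedge p == w] = [set (t, (s, u)); (u, (s, t))].
  apply/setP => -[v [x y]]; rewrite !inE /open_path /path_wedge Hw /=; apply/idP/idP.
    case/andP=> _ /eqP /(eq_set2_set2 st su tu) [-> [[-> ->]|[-> ->]]];
    by rewrite eqxx ?orbT.
  case/orP => /eqP [-> -> ->].
    by rewrite e_sym est esu tu ntu eqxx.
  by rewrite e_sym esu est eq_sym tu e_sym ntu setUC eqxx.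
by rewrite cards2; case: eqP => // -[/eqP]; rewrite (negbTE tu).
Qed.

Lemma card_open_paths : #|open_paths| = (2 * #|wedges e :\: closed_wedges e|)%N.
Proof.
rewrite -sum1_card (partition_big path_wedge (mem (wedges e :\: closed_wedges e))) /=;
  last exact: path_wedge_open.
rewrite mulnC -sum_nat_const; apply: eq_bigr => w /card_path_wedge_fibre <-.
by rewrite -sum1_card; apply: eq_bigl => p; rewrite inE.
Qed.

Lemma closed_wedges_sub : closed_wedges e \subset wedges e.
Proof. by apply/subsetP => w; rewrite inE => /andP []. Qed.

End Wedges.

Local Open Scope ring_scope.

Theorem lemma1 (T : finType) (e : rel T)
    (e_sym : symmetric e) (e_irr : irreflexive e)
    (hW : (0 < #|wedges e|)%N) :
  \sum_(v : T) ((cut e (closed_nbhd e v))%:R / (#|wedges e|)%:R : rat)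
  = 2 * (1 - kappa e).
Proof.
rewrite -mulr_suml -natr_sum sum_cut_closed_nbhd // card_open_paths //.
rewrite cardsD (setIidPr (closed_wedges_sub e)) natrM natrB
  ?subset_leq_card ?closed_wedges_sub //.
have W0 : #|wedges e|%:R != 0 :> rat by rewrite pnatr_eq0 -lt0n.
by rewrite /kappa; field.
Qed.
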